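(* Let $G=(V,E)$ be a finite, connected, simple graph with generic weights $(w_x)_{x\in V\cup E}$ and ground state $M$. Let $v\in V$ and $e\in E$. If $e=(u,v)$ is inaccessible, then $e\notin M$. If $O(v)<0$, then $v\in M$.
   Context: A matching of $G$ is a set $M\subset V\cup E$ such that every vertex either belongs to $M$ or is an endpoint of exactly one edge of $M$, but not both; $H(M)=\sum_{x\in M}w_x$ and the ground state is the matching of minimal weight. Weights are generic if no nontrivial integer combination of finitely many weights vanishes. The optimality of a vertex $v$ is $O(v)=\max_{u\sim v}(w_u+w_v-w_{(u,v)})$, the maximum over neighbours $u$ of $v$. An edge $e=(u,v)$ is inaccessible if $w_e>w_u+w_v$. *)

From HB Require Import structures.
From mathcomp Require Import all_boot all_order all_algebra.
Set Implicit Arguments. Unset Strict Implicit. Unset Printing Implicit Defensive.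
Import Order.TTheory GRing.Theory Num.Theory.
Local Open Scope ring_scope.

Definition simple_graph (T : finType) (adj : rel T) : Prop :=
  symmetric adj /\ irreflexive adj.

Definition connected_graph (T : finType) (adj : rel T) : Prop :=
  forall u v : T, connect adj u v.

Definition edges (T : finType) (adj : rel T) : {set {set T}} :=
  [set e : {set T} | [exists u, exists v, adj u v && (e == [set u; v])]].

(* A matching M ⊂ V ∪ E, given by its vertex part MV and edge part ME:
   every vertex either belongs to M or is an endpoint of exactly one edge of
   M, but not both. *)
Definition is_matching (T : finType) (adj : rel T)
    (MV : {set T}) (ME : {set {set T}}) : Prop :=
  ME \subset edges adj /\
  forall v : T, ((v \in MV) + #|[set e in ME | v \in e]|)%N = 1%N.

Definition energy (R : numDomainType) (T : finType)
    (wV : T -> R) (wE : {set T} -> R) (MV : {set T}) (ME : {set {set T}}) : R :=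
  \sum_(v in MV) wV v + \sum_(e in ME) wE e.

Definition ground_state (R : numDomainType) (T : finType) (adj : rel T)
    (wV : T -> R) (wE : {set T} -> R) (MV : {set T}) (ME : {set {set T}}) : Prop :=
  is_matching adj MV ME /\
  forall MV' ME', is_matching adj MV' ME' -> energy wV wE MV ME <= energy wV wE MV' ME'.

Definition generic (R : numDomainType) (T : finType) (adj : rel T)
    (wV : T -> R) (wE : {set T} -> R) : Prop :=
  forall (cV : T -> int) (cE : {set T} -> int),
    \sum_(v : T) wV v *~ cV v + \sum_(e in edges adj) wE e *~ cE e = 0 ->
    (forall v, cV v = 0) /\ (forall e, e \in edges adj -> cE e = 0).

(* Optimality O(v) = max_{u ~ v} (w_u + w_v - w_{(u,v)}).
   None encodes the maximum over an empty set (isolated vertex), i.e. -oo. *)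
Definition optimality (R : realDomainType) (T : finType) (adj : rel T)
    (wV : T -> R) (wE : {set T} -> R) (v : T) : option R :=
  let f := fun u => wV u + wV v - wE [set u; v] in
  if [pick u | adj v u] is Some u0 then
    Some (\big[Num.max/f u0]_(u | adj v u) f u)
  else None.

Definition optimality_neg (R : realDomainType) (T : finType) (adj : rel T)
    (wV : T -> R) (wE : {set T} -> R) (v : T) : Prop :=
  match optimality adj wV wE v with Some o => o < 0 | None => True end.

Definition inaccessible (R : numDomainType) (T : finType) (adj : rel T)
    (wV : T -> R) (wE : {set T} -> R) (u v : T) : Prop :=
  adj u v /\ wV u + wV v < wE [set u; v].

From HB Require Import structures.
From mathcomp Require Import all_boot all_order all_algebra.
From mathcomp Require Import ring.
Set Implicit Arguments. Unset Strict Implicit. Unset Printing Implicit Defensive.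
Import Order.TTheory GRing.Theory Num.Theory.
Local Open Scope ring_scope.

(* If an edge [e = {u, v}] of a ground state had [w_e > w_u + w_v], replacing
   it by the two vertices [u] and [v] would give a matching of strictly smaller
   weight.  If [v] is not in the ground state, it is covered by some edge
   [{u, v}], and [O(v) < 0] says precisely that this edge is inaccessible. *)

Section MatchingSurgery.

Variables (T : finType) (adj : rel T) (MV : {set T}) (ME : {set {set T}}).
Hypothesis matchingM : is_matching adj MV ME.

Lemma matching_edge_cover (e : {set T}) (x : T) :
  e \in ME -> x \in e -> x \notin MV /\ [set f in ME | x \in f] = [set e].
Proof.
move=> eME xe; have [_ cover] := matchingM.
have eMx : e \in [set f in ME | x \in f] by rewrite inE eME xe.
move: (cover x); case: (x \in MV) => /eqP.
  by rewrite add1n eqSS cards_eq0 => /eqP cover0; rewrite cover0 inE in eMx.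
rewrite add0n => /cards1P[f coverf]; split=> //.
by move: eMx; rewrite coverf inE => /eqP <-.
Qed.

Lemma matching_unmatch_edge (e : {set T}) :
  e \in ME -> is_matching adj (MV :|: e) (ME :\ e).
Proof.
move=> eME; have [subE cover] := matchingM.
split; first exact: subset_trans (subsetDl ME [set e]) subE.
move=> x; have [xe | xNe] := boolP (x \in e).
  have [_ coverx] := matching_edge_cover eME xe.
  suff -> : [set f in ME :\ e | x \in f] = set0 by rewrite cards0 inE xe orbT.
  apply/setP => f; rewrite !inE; apply/negbTE/negP => /andP[/andP[fNe fME] xf].
  have : f \in [set f in ME | x \in f] by rewrite inE fME xf.
  by rewrite coverx inE (negbTE fNe).
suff -> : [set f in ME :\ e | x \in f] = [set f in ME | x \in f].
  by rewrite inE (negbTE xNe) orbF.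
apply/setP => f; rewrite !inE; case: eqVneq => [-> | _] //=.
by rewrite (negbTE xNe) andbF.
Qed.

Lemma energy_unmatch_edge (R : numDomainType) (wV : T -> R) (wE : {set T} -> R)
    (e : {set T}) :
  e \in ME ->
  energy wV wE (MV :|: e) (ME :\ e) + wE e = energy wV wE MV ME + \sum_(x in e) wV x.
Proof.
move=> eME; rewrite /energy.
have disjoint_MVe : [disjoint MV & e].
  apply/pred0P => x /=; apply/negbTE/andP => -[xMV xe].
  by have [/negP] := matching_edge_cover eME xe.
rewrite (eq_bigl [predU MV & e]); last by move=> x; rewrite !inE.
rewrite (bigU _ _ _ disjoint_MVe) (big_setD1 _ eME) /=.
by ring.
Qed.

End MatchingSurgery.

Lemma big_set2 (R : nmodType) (T : finType) (f : T -> R) (u v : T) :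
  u != v -> \sum_(x in [set u; v]) f x = f u + f v.
Proof. by move=> uv; rewrite big_setU1 /= ?big_set1 // inE. Qed.

Lemma inaccessible_notin_ground_state (R : realDomainType) (T : finType)
    (adj : rel T) (wV : T -> R) (wE : {set T} -> R) (MV : {set T})
    (ME : {set {set T}}) (u v : T) :
  irreflexive adj -> ground_state adj wV wE MV ME ->
  inaccessible adj wV wE u v -> [set u; v] \notin ME.
Proof.
move=> irr_adj [matchingM minM] [uv lt_uv]; apply/negP => eME.
have uNv : u != v by apply: contraTneq uv => ->; rewrite irr_adj.
have := minM _ _ (matching_unmatch_edge matchingM eME).
rewrite -(lerD2r (wE [set u; v])) (energy_unmatch_edge matchingM) // big_set2 //.
by rewrite lerD2l leNgt lt_uv.
Qed.

Lemma unmatched_vertex_covered (T : finType) (adj : rel T) (MV : {set T})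
    (ME : {set {set T}}) (v : T) :
  symmetric adj -> is_matching adj MV ME -> v \notin MV ->
  exists2 u, adj v u & [set u; v] \in ME.
Proof.
move=> sym_adj [subE cover] vNMV.
move: (cover v); rewrite (negbTE vNMV) add0n => /eqP/cards1P[e cover_v].
have : e \in [set f in ME | v \in f] by rewrite cover_v set11.
rewrite inE => /andP[eME ve].
have := subsetP subE _ eME; rewrite inE => /existsP[a /existsP[b /andP[ab /eqP ee]]].
move: ve eME; rewrite ee !inE => /orP[] /eqP -> eME.
  by exists b; rewrite // setUC.
by exists a; rewrite // sym_adj.
Qed.

Lemma optimality_neg_lt0 (R : realDomainType) (T : finType) (adj : rel T)
    (wV : T -> R) (wE : {set T} -> R) (u v : T) :
  optimality_neg adj wV wE v -> adj v u -> wV u + wV v - wE [set u; v] < 0.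
Proof.
rewrite /optimality_neg /optimality => optv vu; case: pickP optv => [u0 _ | /(_ u)].
  by apply: le_lt_trans; apply: (le_bigmax_cond _ (fun u => _ + _ - _) vu).
by rewrite vu.
Qed.

Theorem lemma2p5 (R : realFieldType) (T : finType) (adj : rel T)
    (wV : T -> R) (wE : {set T} -> R) (MV : {set T}) (ME : {set {set T}}) :
  simple_graph adj -> connected_graph adj ->
  generic adj wV wE ->
  ground_state adj wV wE MV ME ->
  (forall u v : T, inaccessible adj wV wE u v -> [set u; v] \notin ME) /\
  (forall v : T, optimality_neg adj wV wE v -> v \in MV).
Proof.
move=> [sym_adj irr_adj] _ _ groundM.
have notinM := inaccessible_notin_ground_state irr_adj groundM.
split=> // v optv; apply/negPn/negP => vNMV.
have [u vu uvM] := unmatched_vertex_covered sym_adj groundM.1 vNMV.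
apply/negP: uvM; apply: notinM; split; first by rewrite sym_adj.
by rewrite -subr_lt0 (optimality_neg_lt0 optv vu).
Qed.
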